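(* Let $\mathcal{C}$ be a finite collection of pairwise disjoint closed circular discs in $\mathbb{R}^2$, and let $T_1,\dots,T_m$ be triples of discs from $\mathcal{C}$, each with non-collinear centers, with feasible regions $F_1,\dots,F_m$. Then every point $q\in F_1\cap\cdots\cap F_m$ illuminates all objective arcs of all the triples $T_1,\dots,T_m$: for each $t$ and each point $p$ on an objective arc of a disc of $T_t$, the open segment from $q$ to $p$ does not meet the interior of any disc of $T_t$.
   Context: For two disjoint closed discs $C_a, C_b$ with centers $c_a,c_b$, let $p_a, p_b$ be the points where the segment $\overline{c_ac_b}$ meets the boundary circles of $C_a$ and $C_b$ respectively, and let $l_a, l_b$ be the lines through $p_a$, $p_b$ perpendicular to $\overline{c_ac_b}$. The slab $S_{a,b}$ is the closed region between the parallel lines $l_a$ and $l_b$. For three pairwise disjoint discs $C_i,C_j,C_k$, the feasible region is $S_{i,j}\cap S_{j,k}\cap S_{i,k}$. Objective arcs of a triple $C_i,C_j,C_k$ with non-collinear centers $c_i,c_j,c_k$: on $C_i$, the edges $\overline{c_ic_j}$ and $\overline{c_ic_k}$ meet the boundary circle of $C_i$ in two points, and the objective arc of $C_i$ is the arc between these two points of length less than half the circumference; similarly for $C_j$, $C_k$. *)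

From Stdlib Require Import Reals List.
Open Scope R_scope.

Definition point := (R * R)%type.

Definition vadd (u v : point) : point := (fst u + fst v, snd u + snd v).
Definition vsub (u v : point) : point := (fst u - fst v, snd u - snd v).
Definition vscale (a : R) (u : point) : point := (a * fst u, a * snd u).
Definition dot (u v : point) : R := fst u * fst v + snd u * snd v.
Definition norm (u : point) : R := sqrt (dot u u).
Definition dist (u v : point) : R := norm (vsub u v).

Record cdisc := mkCDisc { center : point; radius : R }.

Definition in_closed_disc (D : cdisc) (x : point) : Prop := dist x (center D) <= radius D.
Definition in_interior (D : cdisc) (x : point) : Prop := dist x (center D) < radius D.
Definition on_boundary (D : cdisc) (x : point) : Prop := dist x (center D) = radius D.

Definition discs_disjoint (D1 D2 : cdisc) : Prop :=
  forall x, ~ (in_closed_disc D1 x /\ in_closed_disc D2 x).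

(* p_a : the point where segment c_a c_b meets the boundary circle of C_a. *)
Definition contact_point (Da Db : cdisc) : point :=
  vadd (center Da)
       (vscale (radius Da / dist (center Db) (center Da)) (vsub (center Db) (center Da))).

(* The slab S_{a,b}: closed region between the lines through p_a and p_b
   perpendicular to c_a c_b. *)
Definition in_slab (Da Db : cdisc) (x : point) : Prop :=
  let u := vsub (center Db) (center Da) in
  let pa := contact_point Da Db in
  let pb := contact_point Db Da in
  (0 <= dot (vsub x pa) u /\ dot (vsub x pb) u <= 0) \/
  (dot (vsub x pa) u <= 0 /\ 0 <= dot (vsub x pb) u).

Definition triple := (cdisc * cdisc * cdisc)%type.

Definition t1 (T : triple) : cdisc := fst (fst T).
Definition t2 (T : triple) : cdisc := snd (fst T).
Definition t3 (T : triple) : cdisc := snd T.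

Definition disc_of_triple (T : triple) (D : cdisc) : Prop :=
  D = t1 T \/ D = t2 T \/ D = t3 T.

Definition in_feasible (T : triple) (x : point) : Prop :=
  in_slab (t1 T) (t2 T) x /\ in_slab (t2 T) (t3 T) x /\ in_slab (t1 T) (t3 T) x.

Definition collinear (a b c : point) : Prop :=
  (fst b - fst a) * (snd c - snd a) - (snd b - snd a) * (fst c - fst a) = 0.

Definition noncollinear_centers (T : triple) : Prop :=
  ~ collinear (center (t1 T)) (center (t2 T)) (center (t3 T)).

(* Objective arc of D_i w.r.t. D_j, D_k: the minor arc of the boundary circle
   of D_i between the points where c_i c_j and c_i c_k cross it, i.e. the
   boundary points lying in the (convex, angle < pi) angular sector at c_i
   spanned by c_j - c_i and c_k - c_i. *)
Definition on_objective_arc_of (Di Dj Dk : cdisc) (p : point) : Prop :=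
  on_boundary Di p /\
  exists a b : R, 0 <= a /\ 0 <= b /\
    vsub p (center Di) =
      vadd (vscale a (vsub (center Dj) (center Di)))
           (vscale b (vsub (center Dk) (center Di))).

Definition on_objective_arc (T : triple) (p : point) : Prop :=
  on_objective_arc_of (t1 T) (t2 T) (t3 T) p \/
  on_objective_arc_of (t2 T) (t1 T) (t3 T) p \/
  on_objective_arc_of (t3 T) (t1 T) (t2 T) p.

Definition in_open_segment (q p x : point) : Prop :=
  exists t : R, 0 < t < 1 /\ x = vadd q (vscale t (vsub p q)).

(* Every disc [D] of a triple that could block the segment from [q] to [p] is cut off from
   both endpoints by a tangent line of [D]: both [q] and [p] lie in the closed half-plane
   beyond that line, which is convex and misses the interior of [D].  For a disc [B] other
   than the disc [A] carrying the arc, the line is the boundary of the slab [S_{A,B}] on the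
   side of [B]; the whole disc [A] lies beyond it because the discs are disjoint.  For [A]
   itself, the line is the tangent at [p]: writing [p - c_A] as a nonnegative combination of
   [c_B - c_A] and [c_C - c_A], the slab conditions at [c_A] add up to [q] lying beyond it. *)

From Stdlib Require Import Reals List Lra Psatz.
Open Scope R_scope.

Lemma dot_self_nonneg u : 0 <= dot u u.
Proof. destruct u; unfold dot; simpl; nra. Qed.

Lemma norm_nonneg u : 0 <= norm u.
Proof. apply sqrt_pos. Qed.

Lemma norm_sqr u : norm u * norm u = dot u u.
Proof. apply sqrt_sqrt, dot_self_nonneg. Qed.

Lemma norm_le_sqr w r : 0 <= r -> dot w w <= r * r -> norm w <= r.
Proof. intros hr h; pose proof (norm_sqr w); pose proof (norm_nonneg w); nra. Qed.

Lemma dot_le_norm_mult u v : dot u v <= norm u * norm v.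
Proof.
  pose proof (norm_sqr u); pose proof (norm_sqr v).
  pose proof (norm_nonneg u); pose proof (norm_nonneg v).
  assert (lagrange : dot u v * dot u v <= dot u u * dot v v).
  { destruct u as [u1 u2], v as [v1 v2]; unfold dot; simpl.
    pose proof (Rle_0_sqr (u1 * v2 - u2 * v1)); unfold Rsqr in *; nra. }
  assert (0 <= norm u * norm v) by nra.
  replace (dot u u * dot v v) with ((norm u * norm v) * (norm u * norm v)) in lagrange
    by (rewrite <- (norm_sqr u), <- (norm_sqr v); ring).
  nra.
Qed.

Lemma norm_nonneg_comb_le a b u v : 0 <= a -> 0 <= b ->
  norm (vadd (vscale a u) (vscale b v)) <= a * norm u + b * norm v.
Proof.
  intros ha hb.
  pose proof (norm_nonneg u); pose proof (norm_nonneg v).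
  pose proof (dot_le_norm_mult u v); pose proof (norm_sqr u); pose proof (norm_sqr v).
  apply norm_le_sqr; [nra|].
  replace (dot (vadd (vscale a u) (vscale b v)) (vadd (vscale a u) (vscale b v)))
    with (a * a * dot u u + 2 * (a * b) * dot u v + b * b * dot v v)
    by (destruct u, v; unfold dot, vadd, vscale; simpl; ring).
  assert (0 <= a * b) by nra.
  nra.
Qed.

Lemma dist_sym a b : dist a b = dist b a.
Proof. unfold dist, norm; f_equal; destruct a, b; unfold dot, vsub; simpl; ring. Qed.

(* The closed half-plane bounded by the tangent line of [D] with outer normal [w],
   on the side away from [D]. *)
Definition beyond_tangent (D : cdisc) (w x : point) : Prop :=
  radius D * norm w <= dot (vsub x (center D)) w.

Lemma beyond_tangent_not_interior D w x :
  0 < norm w -> beyond_tangent D w x -> ~ in_interior D x.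
Proof.
  unfold beyond_tangent, in_interior, dist; intros hw h.
  pose proof (dot_le_norm_mult (vsub x (center D)) w).
  assert (radius D <= norm (vsub x (center D))) by (apply Rmult_le_reg_r with (norm w); lra).
  lra.
Qed.

Lemma beyond_tangent_open_segment D w q p x :
  beyond_tangent D w q -> beyond_tangent D w p -> in_open_segment q p x ->
  beyond_tangent D w x.
Proof.
  unfold beyond_tangent; intros hq hp [t [ht ->]].
  replace (dot (vsub (vadd q (vscale t (vsub p q))) (center D)) w)
    with ((1 - t) * dot (vsub q (center D)) w + t * dot (vsub p (center D)) w)
    by (destruct q, p, (center D), w; unfold dot, vsub, vadd, vscale; simpl; ring).
  nra.
Qed.

Lemma beyond_tangent_segment_not_interior D w q p x :
  0 < norm w -> beyond_tangent D w q -> beyond_tangent D w p ->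
  in_open_segment q p x -> ~ in_interior D x.
Proof.
  intros hw hq hp hs.
  exact (beyond_tangent_not_interior D w x hw (beyond_tangent_open_segment D w q p x hq hp hs)).
Qed.

Lemma disjoint_discs_separated A B :
  0 < radius A -> 0 < radius B -> discs_disjoint A B ->
  radius A + radius B < dist (center B) (center A).
Proof.
  intros ha hb hd.
  destruct (Rlt_or_le (radius A + radius B) (dist (center B) (center A))) as [|hle]; auto.
  exfalso.
  set (u := vsub (center B) (center A)).
  set (d := dist (center B) (center A)) in *.
  assert (hdd : d * d = dot u u) by apply norm_sqr.
  assert (0 <= d) by apply norm_nonneg.
  (* The point dividing [c_A c_B] in the ratio [r_A : r_B] lies in both discs. *)
  set (t := radius A / (radius A + radius B)).
  assert (hta : t * (radius A + radius B) = radius A) by (unfold t; field; lra).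
  assert (0 <= t <= 1).
  { split; [unfold t; apply Rmult_le_pos; [lra|left; apply Rinv_0_lt_compat; lra]|nra]. }
  assert (hds : d * d <= (radius A + radius B) * (radius A + radius B)) by nra.
  apply (hd (vadd (center A) (vscale t u))); unfold in_closed_disc, dist; split;
    apply norm_le_sqr; try lra.
  - replace (dot (vsub (vadd (center A) (vscale t u)) (center A))
                 (vsub (vadd (center A) (vscale t u)) (center A)))
      with (t * t * dot u u)
      by (destruct (center A), u; unfold dot, vsub, vadd, vscale; simpl; ring).
    rewrite <- hdd, <- hta.
    apply Rmult_le_compat_l with (r := t * t) in hds; [nra|apply Rle_0_sqr].
  - replace (dot (vsub (vadd (center A) (vscale t u)) (center B))
                 (vsub (vadd (center A) (vscale t u)) (center B)))
      with ((1 - t) * (1 - t) * dot u u)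
      by (unfold u; destruct (center A), (center B); unfold dot, vsub, vadd, vscale; simpl; ring).
    replace (radius B) with ((1 - t) * (radius A + radius B)) by lra.
    rewrite <- hdd.
    apply Rmult_le_compat_l with (r := (1 - t) * (1 - t)) in hds; [nra|apply Rle_0_sqr].
Qed.

Lemma in_slab_sym A B x : in_slab A B x -> in_slab B A x.
Proof.
  unfold in_slab.
  assert (flip : forall y, dot (vsub x y) (vsub (center A) (center B)) =
                           - dot (vsub x y) (vsub (center B) (center A)))
    by (intros; destruct x, y, (center A), (center B); unfold dot, vsub; simpl; ring).
  rewrite !flip; lra.
Qed.

Lemma in_slab_beyond_tangent A B x :
  0 < radius A -> 0 < radius B -> radius A + radius B < dist (center B) (center A) ->
  in_slab A B x -> beyond_tangent A (vsub (center B) (center A)) x.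
Proof.
  intros ha hb hsep hsl.
  unfold in_slab, contact_point in hsl; rewrite (dist_sym (center A)) in hsl.
  unfold beyond_tangent; fold (dist (center B) (center A)).
  set (d := dist (center B) (center A)) in *.
  assert (hdd : d * d = dot (vsub (center B) (center A)) (vsub (center B) (center A)))
    by apply norm_sqr.
  clearbody d.
  destruct A as [[a1 a2] ra], B as [[b1 b2] rb], x as [x1 x2].
  unfold dot, vsub, vadd, vscale in *; simpl in *.
  set (X := (x1 - a1) * (b1 - a1) + (x2 - a2) * (b2 - a2)).
  (* In the coordinate [X] along [c_B - c_A] the slab is [r_A d <= X <= d^2 - r_B d]. *)
  assert (EA : (x1 - (a1 + ra / d * (b1 - a1))) * (b1 - a1)
               + (x2 - (a2 + ra / d * (b2 - a2))) * (b2 - a2) = X - ra * d).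
  { replace (ra * d) with (ra / d * (d * d)) by (field; lra). rewrite hdd; unfold X; ring. }
  assert (EB : (x1 - (b1 + rb / d * (a1 - b1))) * (b1 - a1)
               + (x2 - (b2 + rb / d * (a2 - b2))) * (b2 - a2) = X - d * d + rb * d).
  { replace (rb * d) with (rb / d * (d * d)) by (field; lra). rewrite hdd; unfold X; ring. }
  rewrite EA, EB in hsl; fold X.
  destruct hsl as [[h1 h2]|[h1 h2]]; nra.
Qed.

Lemma boundary_beyond_tangent_of_other A B p :
  radius A + radius B <= dist (center B) (center A) -> on_boundary A p ->
  beyond_tangent B (vsub (center A) (center B)) p.
Proof.
  unfold beyond_tangent, on_boundary; intros hsep hp.
  fold (dist (center A) (center B)); rewrite dist_sym.
  set (u := vsub (center B) (center A)).
  assert (hdd : dist (center B) (center A) * dist (center B) (center A) = dot u u)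
    by apply norm_sqr.
  assert (0 <= dist (center B) (center A)) by apply norm_nonneg.
  pose proof (dot_le_norm_mult (vsub p (center A)) u) as hcs.
  change (norm u) with (dist (center B) (center A)) in hcs.
  fold (dist p (center A)) in hcs; rewrite hp in hcs.
  replace (dot (vsub p (center B)) (vsub (center A) (center B)))
    with (dot u u - dot (vsub p (center A)) u)
    by (unfold u; destruct p, (center A), (center B); unfold dot, vsub; simpl; ring).
  nra.
Qed.

Lemma boundary_beyond_own_tangent A p :
  on_boundary A p -> beyond_tangent A (vsub p (center A)) p.
Proof.
  unfold beyond_tangent, on_boundary, dist; intros hp.
  rewrite <- norm_sqr, hp; lra.
Qed.

Lemma objective_arc_beyond_tangent A B C q p :
  0 <= radius A ->
  beyond_tangent A (vsub (center B) (center A)) q ->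
  beyond_tangent A (vsub (center C) (center A)) q ->
  on_objective_arc_of A B C p -> beyond_tangent A (vsub p (center A)) q.
Proof.
  unfold beyond_tangent; intros hr hqB hqC [_ [a [b [ha [hb hP]]]]].
  pose proof (norm_nonneg_comb_le a b (vsub (center B) (center A)) (vsub (center C) (center A))
                ha hb) as htri.
  rewrite <- hP in htri; rewrite hP.
  replace (dot (vsub q (center A))
             (vadd (vscale a (vsub (center B) (center A))) (vscale b (vsub (center C) (center A)))))
    with (a * dot (vsub q (center A)) (vsub (center B) (center A))
          + b * dot (vsub q (center A)) (vsub (center C) (center A)))
    by (destruct q, (center A), (center B), (center C); unfold dot, vsub, vadd, vscale; simpl; ring).
  rewrite <- hP.
  apply Rle_trans with (radius A * (a * norm (vsub (center B) (center A))
                                    + b * norm (vsub (center C) (center A)))).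
  - apply Rmult_le_compat_l; assumption.
  - nra.
Qed.

Lemma other_disc_illuminated A B q p x :
  0 < radius A -> 0 < radius B -> discs_disjoint A B -> in_slab A B q ->
  on_boundary A p -> in_open_segment q p x -> ~ in_interior B x.
Proof.
  intros ha hb hd hq hp hs.
  pose proof (disjoint_discs_separated A B ha hb hd) as hsep.
  assert (hsep' : radius B + radius A < dist (center A) (center B)) by (rewrite dist_sym; lra).
  apply (beyond_tangent_segment_not_interior B (vsub (center A) (center B)) q p x).
  - fold (dist (center A) (center B)); lra.
  - exact (in_slab_beyond_tangent B A q hb ha hsep' (in_slab_sym A B q hq)).
  - exact (boundary_beyond_tangent_of_other A B p (Rlt_le _ _ hsep) hp).
  - exact hs.
Qed.

Lemma objective_arc_illuminated A B C q p x :
  0 < radius A -> 0 < radius B -> 0 < radius C ->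
  discs_disjoint A B -> discs_disjoint A C -> in_slab A B q -> in_slab A C q ->
  on_objective_arc_of A B C p -> in_open_segment q p x ->
  forall D, D = A \/ D = B \/ D = C -> ~ in_interior D x.
Proof.
  intros ha hb hc hdB hdC hqB hqC harc hs D [-> | [-> | ->]].
  - pose proof (proj1 harc) as hp.
    apply (beyond_tangent_segment_not_interior A (vsub p (center A)) q p x); auto.
    + unfold on_boundary, dist in hp; lra.
    + apply (objective_arc_beyond_tangent A B C q p); auto; [lra| |];
        apply in_slab_beyond_tangent; auto; apply disjoint_discs_separated; auto.
    + exact (boundary_beyond_own_tangent A p hp).
  - exact (other_disc_illuminated A B q p x ha hb hdB hqB (proj1 harc) hs).
  - exact (other_disc_illuminated A C q p x ha hc hdC hqC (proj1 harc) hs).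
Qed.

Lemma noncollinear_centers_distinct T :
  noncollinear_centers T -> t1 T <> t2 T /\ t2 T <> t3 T /\ t1 T <> t3 T.
Proof. intros h; repeat split; intros e; apply h; unfold collinear; rewrite e; ring. Qed.

Theorem corollary1 (C : list cdisc) (Ts : list triple) :
  (forall D, In D C -> 0 < radius D) ->
  (forall D1 D2, In D1 C -> In D2 C -> D1 <> D2 -> discs_disjoint D1 D2) ->
  (forall T, In T Ts ->
     In (t1 T) C /\ In (t2 T) C /\ In (t3 T) C /\ noncollinear_centers T) ->
  forall q : point, (forall T, In T Ts -> in_feasible T q) ->
  forall T, In T Ts ->
  forall p : point, on_objective_arc T p ->
  forall D, disc_of_triple T D ->
  forall x : point, in_open_segment q p x -> ~ in_interior D x.
Proof.
  intros hr hdisj hT q hq T hin p hp D hD x hs.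
  destruct (hT T hin) as [i1 [i2 [i3 hnc]]].
  destruct (noncollinear_centers_distinct T hnc) as [n12 [n23 n13]].
  destruct (hq T hin) as [s12 [s23 s13]].
  pose proof (hr _ i1); pose proof (hr _ i2); pose proof (hr _ i3).
  pose proof (in_slab_sym _ _ _ s12); pose proof (in_slab_sym _ _ _ s13);
    pose proof (in_slab_sym _ _ _ s23).
  unfold disc_of_triple in hD.
  destruct hp as [hp | [hp | hp]].
  - apply (objective_arc_illuminated (t1 T) (t2 T) (t3 T) q p x); auto.
  - apply (objective_arc_illuminated (t2 T) (t1 T) (t3 T) q p x); auto; tauto.
  - apply (objective_arc_illuminated (t3 T) (t1 T) (t2 T) q p x); auto; tauto.
Qed.
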